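(* $(\mathbb{S},\sigma)$ is the final $F$-coalgebra in $\mathbf{Met_3}^{C}$.
   Context: A tripointed metric space is a set with three distinct points $T,L,R$ and a metric bounded by $1$ in which $T,L,R$ have pairwise distance $1$. $\mathbf{Met_3}^{C}$: tripointed metric spaces with continuous maps preserving $T,L,R$. Let $M=\{a,b,c\}$. For a tripointed metric space $X$, $M\times X$ has metric $d((m,x),(n,y))=\tfrac12d(x,y)$ if $m=n$ and $1$ otherwise; $M\otimes X$ is the quotient metric space by the equivalence relation generated by $(b,T)\sim(a,L)$, $(a,R)\sim(c,T)$, $(c,L)\sim(b,R)$, with elements $m\otimes x$ and distinguished points $a\otimes T,b\otimes L,c\otimes R$; $F=M\otimes-$ with $(M\otimes f)(m\otimes x)=m\otimes f(x)$. A coalgebra is $(X,e\colon X\to FX)$; it is final if every coalgebra has a unique coalgebra morphism $h$ into it ($\beta\circ h=Fh\circ\alpha$). The Sierpinski gasket $\mathbb{S}\subset\mathbb{R}^2$ is the unique nonempty compact set with $\mathbb{S}=\sigma_a(\mathbb{S})\cup\sigma_b(\mathbb{S})\cup\sigma_c(\mathbb{S})$, where $\sigma_a(x,y)=(x/2,y/2)+(1/4,\sqrt3/4)$, $\sigma_b(x,y)=(x/2,y/2)$, $\sigma_c(x,y)=(x/2,y/2)+(1/2,0)$; it carries the Euclidean metric and distinguished points $T=(1/2,\sqrt3/2)$, $L=(0,0)$, $R=(1,0)$. The map $\tau\colon M\otimes\mathbb{S}\to\mathbb{S}$, $\tau(m\otimes x)=\sigma_m(x)$, is a bijection preserving distinguished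 points, and $\sigma=\tau^{-1}\colon\mathbb{S}\to M\otimes\mathbb{S}$. *)

From HB Require Import structures.
From mathcomp Require Import all_boot all_order all_algebra.
From mathcomp Require Import all_classical all_reals all_analysis.
From Stdlib Require Import Relations.
Set Implicit Arguments.
Unset Strict Implicit.
Unset Printing Implicit Defensive.
Import Order.TTheory GRing.Theory Num.Theory.
Import numFieldNormedType.Exports.
Local Open Scope ring_scope.
Local Open Scope classical_set_scope.

Definition is_tripointed_metric (R : realType) (X : Type) (d : X -> X -> R)
    (T L Rt : X) : Prop :=
  [/\ (forall x y, 0 <= d x y),
      (forall x y, d x y = 0 <-> x = y),
      (forall x y, d x y = d y x),
      (forall x y z, d x z <= d x y + d y z)
    & (forall x y, d x y <= 1)] /\
  [/\ T <> L, T <> Rt, L <> Rt & [/\ d T L = 1, d T Rt = 1 & d L Rt = 1]].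

Record Met3 (R : realType) := {
  m3car :> Type;
  m3dist : m3car -> m3car -> R;
  m3T : m3car;
  m3L : m3car;
  m3R : m3car;
  m3ax : is_tripointed_metric m3dist m3T m3L m3R }.

Definition met_continuous (R : realType) (X Y : Type) (dX : X -> X -> R)
    (dY : Y -> Y -> R) (f : X -> Y) : Prop :=
  forall x (e : R), 0 < e ->
    exists2 dl : R, 0 < dl & forall y, dX x y < dl -> dY (f x) (f y) < e.

Definition met3C_hom (R : realType) (X Y : Type) (dX : X -> X -> R)
    (TX LX RX : X) (dY : Y -> Y -> R) (TY LY RY : Y) (f : X -> Y) : Prop :=
  [/\ met_continuous dX dY f, f TX = TY, f LX = LY & f RX = RY].

Inductive Mlab := Ma | Mb | Mc.

Definition Mlab_eqb (m n : Mlab) : bool :=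
  match m, n with
  | Ma, Ma | Mb, Mb | Mc, Mc => true
  | _, _ => false
  end.

Section Tensor.
Variables (R : realType) (X : Type) (d : X -> X -> R) (T L Rt : X).

Definition dprod (p q : Mlab * X) : R :=
  if Mlab_eqb p.1 q.1 then d p.2 q.2 / 2 else 1.

Definition glue0 (p q : Mlab * X) : Prop :=
  [\/ p = (Mb, T) /\ q = (Ma, L),
      p = (Ma, Rt) /\ q = (Mc, T)
    | p = (Mc, L) /\ q = (Mb, Rt)].

Definition glue : Mlab * X -> Mlab * X -> Prop :=
  clos_refl_sym_trans (Mlab * X) glue0.

Definition Tens : Type := {C : Mlab * X -> Prop | exists p, C = glue p}.

Definition tens (m : Mlab) (x : X) : Tens :=
  exist (fun C => exists p, C = glue p) (glue (m, x)) (ex_intro _ (m, x) erefl).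

(** [chain p q r]: there is a chain p = p0, q0 ~ p1, q1 ~ p2, ..., q_n = q
    of total length r = sum_i dprod p_i q_i. *)
Inductive chain : Mlab * X -> Mlab * X -> R -> Prop :=
  | chain_one p q : chain p q (dprod p q)
  | chain_cons p q0 p1 q r : glue q0 p1 -> chain p1 q r ->
      chain p q (dprod p q0 + r).

Definition dtens (u v : Tens) : R :=
  inf [set r : R | exists p q, proj1_sig u p /\ proj1_sig v q /\ chain p q r].

Definition tensT : Tens := tens Ma T.
Definition tensL : Tens := tens Mb L.
Definition tensR : Tens := tens Mc Rt.

End Tensor.

(** F on morphisms, as a graph: (M (x) f)(m (x) x) = m (x) f(x). *)
Definition Fmap_graph (R : realType) (X Y : Type) (TX LX RX : X) (TY LY RY : Y)
    (f : X -> Y) (u : Tens TX LX RX) (v : Tens TY LY RY) : Prop :=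
  forall m x, u = tens TX LX RX m x -> v = tens TY LY RY m (f x).

Definition is_coalgebra (R : realType) (X : Type) (d : X -> X -> R) (T L Rt : X)
    (e : X -> Tens T L Rt) : Prop :=
  met3C_hom d T L Rt (@dtens R X d T L Rt) (tensT T L Rt) (tensL T L Rt) (tensR T L Rt) e.

Definition is_coalg_hom (R : realType) (X Y : Type)
    (dX : X -> X -> R) (TX LX RX : X) (alpha : X -> Tens TX LX RX)
    (dY : Y -> Y -> R) (TY LY RY : Y) (beta : Y -> Tens TY LY RY)
    (h : X -> Y) : Prop :=
  met3C_hom dX TX LX RX dY TY LY RY h /\
  forall x, @Fmap_graph R X Y TX LX RX TY LY RY h (alpha x) (beta (h x)).

Definition is_final_coalgebra (R : realType) (Z : Type) (dZ : Z -> Z -> R)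
    (TZ LZ RZ : Z) (beta : Z -> Tens TZ LZ RZ) : Prop :=
  forall (Y : Met3 R) (alpha : Y -> Tens (m3T Y) (m3L Y) (m3R Y)),
    @is_coalgebra R Y (@m3dist R Y) (m3T Y) (m3L Y) (m3R Y) alpha ->
    exists! h : Y -> Z,
      @is_coalg_hom R Y Z (@m3dist R Y) (m3T Y) (m3L Y) (m3R Y) alpha
        dZ TZ LZ RZ beta h.

Definition sig_map (R : realType) (m : Mlab) (p : R * R) : R * R :=
  match m with
  | Ma => (p.1 / 2 + 1 / 4, p.2 / 2 + Num.sqrt 3 / 4)
  | Mb => (p.1 / 2, p.2 / 2)
  | Mc => (p.1 / 2 + 1 / 2, p.2 / 2)
  end.

Definition euclid (R : realType) (p q : R * R) : R :=
  Num.sqrt ((p.1 - q.1) ^+ 2 + (p.2 - q.2) ^+ 2).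

From Pilot Require Import Defs.
From mathcomp Require Import all_boot all_order all_algebra.
From mathcomp Require Import all_classical all_reals all_analysis.
From mathcomp Require Import ring lra.
From Stdlib Require Import Relations.
Import Order.TTheory GRing.Theory Num.Theory.
Import numFieldNormedType.Exports.
Set Implicit Arguments.
Unset Strict Implicit.
Unset Printing Implicit Defensive.
Local Open Scope ring_scope.
Local Open Scope classical_set_scope.

(* The gasket lies in the closed triangle D with vertices T, L, R. Two copies
   sigma_m(D), sigma_n(D) meet only at one contact point, and there they lie in
   opposite cones of half-angle pi/3; hence a detour through the contact point at most
   doubles distances, and sigma is 2-Lipschitz for the quotient metric of M (x) S,
   which below 1/2 is computed by chains with at most one junction.
   Given a coalgebra (Y, alpha), unfold alpha y = m_0 (x) y_1, alpha y_1 = m_1 (x) y_2,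
   and so on; as every sigma_m halves distances, the only possible image of y is the
   limit of sigma_{m_0} ... sigma_{m_(n-1)} (T). Its continuity is proved at precision
   2^-n by induction on n: continuity of alpha keeps the first labels equal, or lets
   them differ only across a junction, near which one uses continuity at the vertices
   of Y, fixed by alpha. *)

Lemma Mlab_eqbP m n : reflect (m = n) (Mlab_eqb m n).
Proof. by case: m; case: n; constructor. Qed.

(* The vertex of the [m]-th copy that touches the [n]-th copy, or its outer vertex if
   [n = m]: the gluing identifies [(m, corner m n)] with [(n, corner n m)]. *)
Definition corner (X : Type) (T L Rt : X) (m n : Mlab) : X :=
  match m, n with
  | Ma, Ma => T | Mb, Mb => L | Mc, Mc => Rt
  | Ma, Mb => L | Ma, Mc => Rt | Mb, Ma => T
  | Mb, Mc => Rt | Mc, Ma => T | Mc, Mb => L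
  end.

Lemma corner_map (X Y : Type) (f : X -> Y) (T L Rt : X) m n :
  f (corner T L Rt m n) = corner (f T) (f L) (f Rt) m n.
Proof. by case: m; case: n. Qed.

Lemma corner_vertex (X : Type) (T L Rt : X) m n :
  exists k, corner T L Rt m n = corner T L Rt k k.
Proof. by case: m; case: n; do ?[by exists Ma | by exists Mb | by exists Mc]. Qed.

(** * The triangle and the similitudes sig_map *)

Section Triangle.
Variable R : realType.
Implicit Types (p q : R * R) (a b c : R).

Definition vertT : R * R := (1 / 2, Num.sqrt 3 / 2).
Definition vertL : R * R := (0, 0).
Definition vertR : R * R := (1, 0).
Local Notation vcorner := (corner vertT vertL vertR).

Definition triangle : set (R * R) :=
  [set p | [/\ 0 <= p.2, p.2 <= Num.sqrt 3 * p.1 & p.2 <= Num.sqrt 3 - Num.sqrt 3 * p.1]].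

Lemma sqrt3_bounds : Num.sqrt (3 : R) ^+ 2 = 3 /\ 1 < Num.sqrt (3 : R) < 2.
Proof.
have s2 : Num.sqrt (3 : R) ^+ 2 = 3 by rewrite sqr_sqrtr // ler0n.
have s0 := sqrtr_ge0 (3 : R).
by split=> //; apply/andP; split; nra.
Qed.

Lemma sqrtr_le a b : 0 <= b -> a <= b ^+ 2 -> Num.sqrt a <= b.
Proof. by move=> b0 ab; apply: le_trans (ler_wsqrtr ab) _; rewrite sqrtr_sqr ger0_norm. Qed.

Lemma ler_sqrtr a b : b ^+ 2 <= a -> b <= Num.sqrt a.
Proof. by move=> ab; apply: le_trans (ler_wsqrtr ab); rewrite sqrtr_sqr ler_norm. Qed.

Lemma euclid_ge0 p q : 0 <= euclid p q.
Proof. exact: sqrtr_ge0. Qed.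

Lemma euclid_sym p q : euclid p q = euclid q p.
Proof. by rewrite /euclid -!(sqrrN (p.1 - _)) -!(sqrrN (p.2 - _)) !opprB. Qed.

Lemma euclid_eq0 p q : euclid p q = 0 <-> p = q.
Proof.
split; last by move=> ->; rewrite /euclid !subrr expr0n /= addr0 sqrtr0.
case: p q => [x1 y1] [x2 y2]; rewrite /euclid /= => /eqP; rewrite sqrtr_eq0 => h.
have sx := sqr_ge0 (x1 - x2); have sy := sqr_ge0 (y1 - y2).
have /eqP : (x1 - x2) ^+ 2 = 0 by lra.
have /eqP : (y1 - y2) ^+ 2 = 0 by lra.
by rewrite !sqrf_eq0 !subr_eq0 => /eqP -> /eqP ->.
Qed.

Lemma cauchy_schwarz2 a b c d :
  a * c + b * d <= Num.sqrt (a ^+ 2 + b ^+ 2) * Num.sqrt (c ^+ 2 + d ^+ 2).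
Proof.
apply: le_trans (ler_sqrtr (lexx _)) (sqrtr_le (mulr_ge0 (sqrtr_ge0 _) (sqrtr_ge0 _)) _).
rewrite exprMn !sqr_sqrtr ?addr_ge0 ?sqr_ge0 //.
by have := sqr_ge0 (a * d - b * c); nra.
Qed.

Lemma euclid_triangle_ineq p q r : euclid p r <= euclid p q + euclid q r.
Proof.
rewrite /euclid.
set a := p.1 - q.1; set b := p.2 - q.2; set c := q.1 - r.1; set d := q.2 - r.2.
have -> : p.1 - r.1 = a + c by rewrite /a /c; ring.
have -> : p.2 - r.2 = b + d by rewrite /b /d; ring.
set A := Num.sqrt (a ^+ 2 + b ^+ 2); set C := Num.sqrt (c ^+ 2 + d ^+ 2).
have A0 : 0 <= A := sqrtr_ge0 _.
have C0 : 0 <= C := sqrtr_ge0 _.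
have A2 : A ^+ 2 = a ^+ 2 + b ^+ 2 by rewrite sqr_sqrtr // addr_ge0 // sqr_ge0.
have C2 : C ^+ 2 = c ^+ 2 + d ^+ 2 by rewrite sqr_sqrtr // addr_ge0 // sqr_ge0.
have := cauchy_schwarz2 a b c d; rewrite -/A -/C => cs.
by apply: sqrtr_le; nra.
Qed.

Lemma euclid_sig_map m p q : euclid (sig_map m p) (sig_map m q) = euclid p q / 2.
Proof.
have half a b : Num.sqrt (a ^+ 2 + b ^+ 2) / 2 = Num.sqrt ((a / 2) ^+ 2 + (b / 2) ^+ 2).
  have -> : (a / 2) ^+ 2 + (b / 2) ^+ 2 = (1 / 2) ^+ 2 * (a ^+ 2 + b ^+ 2) by ring.
  rewrite sqrtrM ?sqr_ge0 // sqrtr_sqr ger0_norm; last by lra.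
  by rewrite mulrC mul1r.
by rewrite /euclid half; case: m => /=; congr (Num.sqrt (_ ^+ 2 + _ ^+ 2)); ring.
Qed.

Lemma normB1_le_euclid p q : `|p.1 - q.1| <= euclid p q.
Proof. by apply: ler_sqrtr; rewrite real_normK ?num_real // lerDl sqr_ge0. Qed.

Lemma normB2_le_euclid p q : `|p.2 - q.2| <= euclid p q.
Proof. by apply: ler_sqrtr; rewrite real_normK ?num_real // lerDr sqr_ge0. Qed.

Lemma euclid_le_normB p q : euclid p q <= `|p.1 - q.1| + `|p.2 - q.2|.
Proof.
apply: sqrtr_le; first by rewrite addr_ge0.
have h1 := normr_ge0 (p.1 - q.1); have h2 := normr_ge0 (p.2 - q.2).
by rewrite -(real_normK (num_real (p.1 - q.1))) -(real_normK (num_real (p.2 - q.2))); nra.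
Qed.

Lemma triangle_diam p q : triangle p -> triangle q -> euclid p q <= 1.
Proof.
case: p q => [x1 y1] [x2 y2] [/= h1 h2 h3] [/= h4 h5 h6].
have [s2 /andP[s1 s3]] := sqrt3_bounds.
set s := Num.sqrt 3 in s2 s1 s3 h1 h2 h3 h4 h5 h6.
apply: sqrtr_le => //; rewrite expr1n /=.
have e : 3 * (x1 - x2) ^+ 2 = (s * x1 - s * x2) ^+ 2 by rewrite -mulrBr exprMn s2.
suff : (s * x1 - s * x2) ^+ 2 + 3 * (y1 - y2) ^+ 2 <= 3 by lra.
move: (s * x1) (s * x2) h2 h3 h5 h6 => X1 X2 h2 h3 h5 h6.
(* In the coordinates (X, y) the triangle is 0 <= y <= X <= s - y. *)
have p1 : 0 <= y1 * (X1 - y1) by apply: mulr_ge0; lra.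
have p2 : 0 <= y1 * (s - X1 - y1) by apply: mulr_ge0; lra.
have p3 : 0 <= (X1 - y1) * (s - X1 - y1) by apply: mulr_ge0; lra.
have q1 : 0 <= y2 * (X2 - y2) by apply: mulr_ge0; lra.
have q2 : 0 <= y2 * (s - X2 - y2) by apply: mulr_ge0; lra.
have q3 : 0 <= (X2 - y2) * (s - X2 - y2) by apply: mulr_ge0; lra.
have r1 : 0 <= y1 * y2 by apply: mulr_ge0.
have r2 : 0 <= (X1 - y1) * (X2 - y2) by apply: mulr_ge0; lra.
have r3 : 0 <= (s - X1 - y1) * (s - X2 - y2) by apply: mulr_ge0; lra.
nra.
Qed.

Lemma triangle_sig_map m p : triangle p -> triangle (sig_map m p).
Proof.
case: p => x y [/= h1 h2 h3]; have [s2 /andP[s1 s3]] := sqrt3_bounds.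
by case: m; split=> /=; rewrite ?mulrDr; lra.
Qed.

Lemma triangle_corner m n : triangle (vcorner m n).
Proof.
have [s2 /andP[s1 s3]] := sqrt3_bounds.
by case: m; case: n; split=> /=; lra.
Qed.

Lemma sig_map_corner m n : sig_map m (vcorner m n) = sig_map n (vcorner n m).
Proof. by case: m; case: n => //=; congr pair; lra. Qed.

Lemma sig_map_vertex m : sig_map m (vcorner m m) = vcorner m m.
Proof. by case: m => /=; congr pair; lra. Qed.

Lemma sig_map_fixed m p : sig_map m p = p -> p = vcorner m m.
Proof. by case: p; case: m => x y /= [e1 e2]; congr pair; lra. Qed.

Definition axis m n : R * R :=
  ((vcorner m m).1 - (vcorner m n).1, (vcorner m m).2 - (vcorner m n).2).

Lemma axis_unit m n : m <> n -> (axis m n).1 ^+ 2 + (axis m n).2 ^+ 2 = 1.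
Proof.
have [s2 /andP[s1 s3]] := sqrt3_bounds.
by case: m; case: n => // _ /=; nra.
Qed.

Lemma axis_opp m n : axis n m = (- (axis m n).1, - (axis m n).2).
Proof. by case: m; case: n; rewrite /axis /=; congr pair; lra. Qed.

(* Near its vertex [c] the triangle lies in the cone of half-angle pi/3 around either
   edge at [c]; the factor 2 is 1 / cos (pi/3). *)
Lemma triangle_cone m n p : m <> n -> triangle p ->
  let c := vcorner m n in
  euclid p c <= 2 * ((axis m n).1 * (p.1 - c.1) + (axis m n).2 * (p.2 - c.2)).
Proof.
case: p => x y mn [/= h1 h2 h3]; have [s2 /andP[s1 s3]] := sqrt3_bounds.
rewrite /euclid /axis.
case: m mn; case: n => // _ /=; set s := Num.sqrt 3 in s2 s1 s3 h1 h2 h3 *.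
all: have p1 : 0 <= y * (s * x - y) by apply: mulr_ge0; lra.
all: have p2 : 0 <= y * (s - s * x - y) by apply: mulr_ge0; lra.
all: have p3 : 0 <= (s * x - y) * (s - s * x - y) by apply: mulr_ge0; lra.
all: apply: sqrtr_le; nra.
Qed.

Lemma sig_map_sub1 m p q : (sig_map m p).1 - (sig_map m q).1 = (p.1 - q.1) / 2.
Proof. by case: m => /=; ring. Qed.

Lemma sig_map_sub2 m p q : (sig_map m p).2 - (sig_map m q).2 = (p.2 - q.2) / 2.
Proof. by case: m => /=; ring. Qed.

Lemma sig_map_cone m n p : m <> n -> triangle p ->
  let z := sig_map m (vcorner m n) in let u := sig_map m p in
  euclid u z <= 2 * ((axis m n).1 * (u.1 - z.1) + (axis m n).2 * (u.2 - z.2)).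
Proof.
move=> mn hp; have := triangle_cone mn hp.
by rewrite /= euclid_sig_map sig_map_sub1 sig_map_sub2 !mulrA -mulrDl; lra.
Qed.

Lemma opposite_cones (a z u v : R * R) : a.1 ^+ 2 + a.2 ^+ 2 = 1 ->
  euclid u z <= 2 * (a.1 * (u.1 - z.1) + a.2 * (u.2 - z.2)) ->
  euclid v z <= - (2 * (a.1 * (v.1 - z.1) + a.2 * (v.2 - z.2))) ->
  euclid u z + euclid v z <= 2 * euclid u v.
Proof.
move=> a1 hu hv.
have := cauchy_schwarz2 a.1 a.2 (u.1 - v.1) (u.2 - v.2).
rewrite a1 sqrtr1 mul1r -/(euclid u v) => cs.
have e : a.1 * (u.1 - v.1) + a.2 * (u.2 - v.2) =
  (a.1 * (u.1 - z.1) + a.2 * (u.2 - z.2)) - (a.1 * (v.1 - z.1) + a.2 * (v.2 - z.2)).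
  by ring.
lra.
Qed.

(* The copies [m] and [n] lie in opposite cones with apex their contact point. *)
Lemma detour_le m n p q : m <> n -> triangle p -> triangle q ->
  euclid p (vcorner m n) / 2 + euclid (vcorner n m) q / 2 <=
  2 * euclid (sig_map m p) (sig_map n q).
Proof.
move=> mn hp hq; have nm : n <> m by move=> e; apply: mn.
rewrite -(euclid_sig_map m) -(euclid_sig_map n) -(sig_map_corner m n).
rewrite (euclid_sym _ (sig_map n q)).
apply: opposite_cones (axis_unit mn) (sig_map_cone mn hp) _.
have := sig_map_cone nm hq; rewrite axis_opp -(sig_map_corner m n) /= !mulNr; lra.
Qed.

Lemma sig_map_eq m n p q : triangle p -> triangle q -> sig_map m p = sig_map n q ->
  (m = n /\ p = q) \/ (m <> n /\ p = vcorner m n /\ q = vcorner n m).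
Proof.
move=> hp hq e; case: (Mlab_eqbP m n) => mn; [left; subst n | right].
  split=> //; apply/euclid_eq0.
  have := euclid_sig_map m p q; rewrite e (euclid_eq0 (sig_map m q) _).2 //.
  have := euclid_ge0 p q; lra.
have := detour_le mn hp hq; rewrite e (euclid_eq0 (sig_map n q) _).2 // mulr0.
have := euclid_ge0 p (vcorner m n); have := euclid_ge0 (vcorner n m) q.
move=> h1 h2 h3; split=> //; split.
- by apply/euclid_eq0; lra.
- by apply/esym/euclid_eq0; lra.
Qed.

End Triangle.

Arguments vertT {R}.
Arguments vertL {R}.
Arguments vertR {R}.
Arguments triangle {R}.
Notation vcorner := (corner vertT vertL vertR).

(** * The quotient M (x) X *)

Section Gluing.
Variables (X : Type) (T L Rt : X).
Hypotheses (nTL : T <> L) (nTR : T <> Rt) (nLR : L <> Rt).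
Local Notation corner := (corner T L Rt).
Local Notation glued := (Defs.glue T L Rt).
Implicit Types (p q r : Mlab * X).

Lemma corner_inj k m n : m <> n -> corner k m <> corner k n.
Proof.
by case: k; case: m; case: n => //= _ e;
  do ?[by apply: nTL | by apply: nTR | by apply: nLR].
Qed.

Definition contact p q : Prop :=
  [/\ p.1 <> q.1, p.2 = corner p.1 q.1 & q.2 = corner q.1 p.1].

Lemma contact_sym p q : contact p q -> contact q p.
Proof. by case=> mn e1 e2; split=> // e; apply: mn. Qed.

Lemma contact_trans p q r : contact p q -> contact q r -> p = r.
Proof.
case: p q r => [m x] [k y] [n z] [/= mk -> ->] [/= km e ->].
case: (Mlab_eqbP m n) => [<- //|mn].
by have := @corner_inj k m n mn; rewrite -e.
Qed.

Lemma glueP p q : glued p q <-> p = q \/ contact p q.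
Proof.
split.
- elim=> [{}p {}q g | {}p | {}p {}q _ [->|c] | {}p {}q {}r _ h1 _ h2].
  + right; case: g => -[-> ->]; split=> //=.
  + by left.
  + by left.
  + by right; apply: contact_sym.
  + case: h1 h2 => [->|c1] [<-|c2]; [by left | by right | by right |].
    by left; apply: contact_trans c1 c2.
- case=> [->|[/= mn e1 e2]]; first exact: rst_refl.
  case: p q mn e1 e2 => [m x] [n y] /= mn -> ->.
  by case: m mn; case: n => // _;
    do ?[by apply: rst_step; do ?[exact: Or31 | exact: Or32 | exact: Or33]
        | by apply: rst_sym; apply: rst_step;
             do ?[exact: Or31 | exact: Or32 | exact: Or33]].
Qed.

Lemma glue_corner m n : m <> n -> glued (m, corner m n) (n, corner n m).
Proof. by move=> mn; apply/glueP; right. Qed.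

Lemma glue_vertex m q : glued (m, corner m m) q -> q = (m, corner m m).
Proof.
case/glueP => [<- //|[/= mn e _]].
by case: (@corner_inj m m q.1 mn).
Qed.

Lemma tens_eq m x n y : tens T L Rt m x = tens T L Rt n y <-> glued (m, x) (n, y).
Proof.
split=> [/(congr1 sval) /= ->|g]; first exact: rst_refl.
apply: eq_exist; apply: funext => q; apply: propext.
by split; [apply: rst_trans; apply: rst_sym | apply: rst_trans].
Qed.

Lemma tens_surj (u : Tens T L Rt) : exists p : Mlab * X, u = tens T L Rt p.1 p.2.
Proof. by case: u => C [[m x] e]; subst C; exists (m, x); apply: eq_exist. Qed.

Definition tens_repr (u : Tens T L Rt) : Mlab * X := sval (cid (tens_surj u)).

Lemma tens_reprK u : tens T L Rt (tens_repr u).1 (tens_repr u).2 = u.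
Proof. exact: esym (svalP (cid (tens_surj u))). Qed.

End Gluing.

Section QuotientMetric.
Variables (R : realType) (X : Type) (d : X -> X -> R) (T L Rt : X).
Hypothesis dX : is_tripointed_metric d T L Rt.
Local Notation corner := (corner T L Rt).
Local Notation glued := (Defs.glue T L Rt).
Local Notation tens := (tens T L Rt).
Local Notation chain := (chain d T L Rt).
Local Notation dprod := (dprod d).
Implicit Types (p q : Mlab * X) (x y z : X).

Let d_ge0 x y : 0 <= d x y. Proof. by case: dX => -[]. Qed.
Let d_xx x : d x x = 0. Proof. by case: dX => -[_ /(_ x x) [_ ->]]. Qed.
Let d_tri x y z : d x z <= d x y + d y z. Proof. by case: dX => -[]. Qed.
Let nTL : T <> L. Proof. by case: dX => _ []. Qed.
Let nTR : T <> Rt. Proof. by case: dX => _ []. Qed.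
Let nLR : L <> Rt. Proof. by case: dX => _ []. Qed.

Lemma dist_corner k m n : m <> n -> d (corner k m) (corner k n) = 1.
Proof.
case: dX => -[_ _ dsym _ _] [_ _ _ [dTL dTR dLR]].
by case: k; case: m; case: n => //= _; rewrite ?dTL ?dTR ?dLR // dsym ?dTL ?dTR ?dLR.
Qed.

Lemma dprod_same m x y : dprod (m, x) (m, y) = d x y / 2.
Proof. by case: m. Qed.

Lemma dprod_diff m n x y : m <> n -> dprod (m, x) (n, y) = 1.
Proof. by rewrite /dprod /=; case: Mlab_eqbP. Qed.

Lemma dprod_ge0 p q : 0 <= dprod p q.
Proof. by rewrite /dprod; case: Mlab_eqb => //; have := d_ge0 p.2 q.2; lra. Qed.

Lemma chain_ge0 p q r : chain p q r -> 0 <= r.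
Proof. by elim=> [? ? | ? ? ? ? ? _ _ r0]; rewrite ?addr_ge0 ?dprod_ge0. Qed.

Lemma dtens_le_chain m x n y r :
  chain (m, x) (n, y) r -> dtens d (tens m x) (tens n y) <= r.
Proof.
move=> c; apply: ge_inf.
  by exists 0 => ? [p [q [_ [_ /chain_ge0]]]].
by exists (m, x), (n, y); split; [exact: rst_refl | split; [exact: rst_refl | exact: c]].
Qed.

Lemma chain_glue_l p p' q r : glued p p' -> chain p' q r -> chain p q r.
Proof. by case: p => m x g /(chain_cons (m, x) g); rewrite dprod_same d_xx mul0r add0r. Qed.

Lemma chain_glue_r p q q' r : chain p q r -> glued q q' -> chain p q' r.
Proof.
elim=> [{}p {}q | {}p q0 p1 {}q {}r g _ IH] g'; last exact: chain_cons g (IH g').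
have := chain_cons p g' (chain_one d T L Rt q' q').
by case: q' {g'} => m x; rewrite dprod_same d_xx mul0r addr0.
Qed.

Lemma dtens_lt_chain m x n y e : dtens d (tens m x) (tens n y) < e ->
  exists2 r, chain (m, x) (n, y) r & r < e.
Proof.
have ne : [set r | exists p q, glued (m, x) p /\ glued (n, y) q /\ chain p q r] !=set0.
  exists (dprod (m, x) (n, y)), (m, x), (n, y).
  by split; [exact: rst_refl | split; [exact: rst_refl | exact: chain_one]].
case/(inf_lt ne) => r [p [q [g1 [g2 c]]]] re; exists r => //.
exact: chain_glue_l g1 (chain_glue_r c (rst_sym _ _ _ _ g2)).
Qed.

(* The length of the shortest chain from [p] to [q] with at most one junction; it
   agrees with the quotient distance wherever either is below 1/2. *)
Definition dlocal p q : R :=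
  if Mlab_eqb p.1 q.1 then d p.2 q.2 / 2
  else d p.2 (corner p.1 q.1) / 2 + d (corner q.1 p.1) q.2 / 2.

Lemma dlocal_same m x y : dlocal (m, x) (m, y) = d x y / 2.
Proof. by case: m. Qed.

Lemma dlocal_diff m n x y : m <> n ->
  dlocal (m, x) (n, y) = d x (corner m n) / 2 + d (corner n m) y / 2.
Proof. by rewrite /dlocal /=; case: Mlab_eqbP. Qed.

Lemma dlocal_step m x y q : dlocal (m, x) q <= d x y / 2 + dlocal (m, y) q.
Proof.
case: q => n z; case: (Mlab_eqbP m n) => [<-|mn].
  by rewrite !dlocal_same; have := d_tri x y z; lra.
by rewrite !dlocal_diff //; have := d_tri x y (corner m n); lra.
Qed.

Lemma dlocal_corner_ge k m j z : j <> k -> j <> m ->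
  1 / 2 <= dlocal (k, corner k m) (j, z).
Proof.
move=> jk jm; rewrite dlocal_diff; last by move=> e; apply: jk.
rewrite dist_corner; last by move=> e; apply: jm.
by have := d_ge0 (corner j k) z; lra.
Qed.

Lemma dlocal_jump k m x q : k <> m -> dlocal (k, corner k m) q < 1 / 2 ->
  dlocal (m, x) q <= d x (corner m k) / 2 + dlocal (k, corner k m) q.
Proof.
case: q => j z km; have mk : m <> k by move=> e; apply: km.
case: (Mlab_eqbP j k) => [->|jk] hq; first by rewrite dlocal_same dlocal_diff.
case: (Mlab_eqbP j m) => [->|jm]; last by have := dlocal_corner_ge z jk jm; lra.
by rewrite dlocal_same dlocal_diff // d_xx; have := d_tri x (corner m k) z; lra.
Qed.

Lemma dlocal_le_chain p q r : chain p q r -> r < 1 / 2 -> dlocal p q <= r.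
Proof.
elim=> [[m x] [n y] | [m x] [k y] p1 {}q r0 g c IH] hr.
  by move: hr; rewrite /dlocal /dprod; case: Mlab_eqb => //; lra.
have r0_ge0 := chain_ge0 c.
case: (Mlab_eqbP m k) => mk; last by move: hr; rewrite dprod_diff //; lra.
subst k; rewrite dprod_same in hr *.
have {}IH : dlocal p1 q <= r0 by apply: IH; have := d_ge0 x y; lra.
move: hr; case/(glueP nTL nTR nLR): g => [e|[]].
  by subst p1; have := dlocal_step m x y q; lra.
case: p1 c IH => j w /= _ IH mj ey ew hr; subst y w.
have jm : j <> m by move=> e; apply: mj.
have hq : dlocal (j, corner j m) q < 1 / 2.
  by apply: le_lt_trans IH _; have := d_ge0 x (corner m j); lra.
by have := dlocal_jump x jm hq; lra.
Qed.

Lemma dtens_le_dlocal m x n y : dtens d (tens m x) (tens n y) <= dlocal (m, x) (n, y).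
Proof.
case: (Mlab_eqbP m n) => [<-|mn].
  by rewrite dlocal_same -(dprod_same m); apply/dtens_le_chain/chain_one.
rewrite dlocal_diff // -(dprod_same m) -(dprod_same n); apply: dtens_le_chain.
apply: chain_cons (glue_corner nTL nTR nLR mn) _; exact: chain_one.
Qed.

Lemma dlocal_lt_dtens m x n y e : dtens d (tens m x) (tens n y) < e -> e <= 1 / 2 ->
  dlocal (m, x) (n, y) < e.
Proof.
case/dtens_lt_chain => r c re e_le.
have r_lt : r < 1 / 2 by apply: lt_le_trans e_le.
exact: le_lt_trans (dlocal_le_chain c r_lt) re.
Qed.

End QuotientMetric.

(** * Geometric decay and self-similar sets *)

Section GeometricDecay.
Variable R : realType.
Implicit Types (x K e a b : R).

Lemma pow2_gt0 n : (0 : R) < 2 ^+ n.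
Proof. exact: exprn_gt0. Qed.

Lemma le0_geometric x K : (forall n, x <= K / 2 ^+ n) -> x <= 0.
Proof.
move=> h; rewrite leNgt; apply/negP => x0.
have [K0|K0] := lerP K 0; first by have := h 0%N; rewrite expr0 divr1; lra.
have := archi_boundP (divr_ge0 (ltW K0) (ltW x0)); set n := Num.bound _ => hn.
have n_lt : (n%:R : R) < 2 ^+ n by rewrite -natrX ltr_nat ltn_expl.
have := h n; rewrite ler_pdivlMr ?pow2_gt0 // => hx.
by move: hn; rewrite ltr_pdivrMr //; nra.
Qed.

Lemma exists_inv_pow2_lt e : 0 < e -> exists n, 1 / 2 ^+ n < e.
Proof.
move=> e0; apply/not_existsP => /= h.
suff : e <= 0 by lra.
by apply: (@le0_geometric _ 1) => n; rewrite leNgt; apply/negP; exact: h n.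
Qed.

Lemma half_pow2S K n : K / 2 ^+ n.+1 = (K / 2 ^+ n) / 2.
Proof. by rewrite exprSr invfM mulrA. Qed.

Lemma cauchy_geometric_lim (u : nat -> R) K :
  (forall n k, `|u (n + k)%N - u n| <= K / 2 ^+ n) ->
  exists l, forall n, `|l - u n| <= K / 2 ^+ n.
Proof.
move=> h.
have bound_le k n : u k - K / 2 ^+ k <= u n + K / 2 ^+ n.
  have w0 j : 0 <= K / 2 ^+ j.
    apply: divr_ge0 (ltW (pow2_gt0 j)).
    by have := h 0%N 0%N; rewrite addn0 subrr normr0 expr0 divr1.
  have [kn|nk] := leqP k n.
    by have := h k (n - k)%N; rewrite subnKC // ler_distl => /andP[]; have := w0 n; lra.
  have := h n (k - n)%N; rewrite subnKC; last exact: ltnW.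
  by rewrite ler_distl => /andP[]; have := w0 k; lra.
set E := [set y | exists n, y = u n - K / 2 ^+ n].
have E_ub n : ubound E (u n + K / 2 ^+ n) by move=> y [k ->]; apply: bound_le.
have E_ne : E !=set0 by exists (u 0%N - K / 2 ^+ 0), 0%N.
exists (sup E) => n; rewrite ler_distl; apply/andP; split.
- by apply: sup_upper_bound; [split; last exists (u 0%N + K / 2 ^+ 0) | exists n].
- exact: ge_sup.
Qed.

Lemma cauchy_geometric_lim2 (u : nat -> R * R) K :
  (forall n k, euclid (u (n + k)%N) (u n) <= K / 2 ^+ n) ->
  exists l, forall n, euclid l (u n) <= 2 * K / 2 ^+ n.
Proof.
move=> h.
have [l1 h1] := @cauchy_geometric_lim (fun n => (u n).1) K
  (fun n k => le_trans (normB1_le_euclid _ _) (h n k)).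
have [l2 h2] := @cauchy_geometric_lim (fun n => (u n).2) K
  (fun n k => le_trans (normB2_le_euclid _ _) (h n k)).
exists (l1, l2) => n; apply: le_trans (euclid_le_normB _ _) _.
by have := h1 n; have := h2 n; rewrite /= -mulrA; lra.
Qed.

Lemma euclid_le_geometric_eq (p q : R * R) K :
  (forall n, euclid p q <= K / 2 ^+ n) -> p = q.
Proof.
move=> h; apply/euclid_eq0/eqP; rewrite eq_le euclid_ge0 andbT.
exact: le0_geometric h.
Qed.

Lemma pos_below2 a b : 0 < a -> 0 < b -> exists2 e, 0 < e & e <= a /\ e <= b.
Proof.
move=> a0 b0; exists (Num.min a b); first by rewrite lt_min a0 b0.
by rewrite !ge_min !lexx orbT.
Qed.

End GeometricDecay.

Lemma selfsimilarP (T : Type) (S : set T) (f : Mlab -> T -> T) :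
  S = f Ma @` S `|` f Mb @` S `|` f Mc @` S ->
  forall x, S x <-> exists m, exists2 y, S y & f m y = x.
Proof.
move=> S_fix x; rewrite {1}S_fix; split.
- by case=> [[]|] [y Sy <-]; [exists Ma | exists Mb | exists Mc]; exists y.
- by case=> -[] [y Sy <-]; [left; left | left; right | right]; exists y.
Qed.

Lemma selfsimilar_ge0 (R : realType) (T : Type) (S : set T) (f : Mlab -> T -> T)
    (phi : T -> R) (K : R) :
  S = f Ma @` S `|` f Mb @` S `|` f Mc @` S ->
  (forall m x, phi x / 2 <= phi (f m x)) ->
  (forall x, S x -> - K <= phi x) -> forall x, S x -> 0 <= phi x.
Proof.
move=> S_fix phi_f phi_K.
have decay n x : S x -> - (K / 2 ^+ n) <= phi x.
  elim: n x => [|n IH] x; first by rewrite expr0 divr1; apply: phi_K.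
  case/(selfsimilarP S_fix) => m [y Sy <-].
  by have := IH y Sy; have := phi_f m y; rewrite half_pow2S; lra.
move=> x Sx; rewrite -oppr_le0; apply: (@le0_geometric _ _ K) => n.
by have := decay n x Sx; lra.
Qed.

Section Attractor.
Variables (R : realType) (S : set (R * R)).
Hypotheses (S_cpt : compact S)
  (S_fix : S = sig_map Ma @` S `|` sig_map Mb @` S `|` sig_map Mc @` S).

Lemma compact_coord_bounded :
  exists2 M : R, 0 <= M & forall q, S q -> `|q.1| <= M /\ `|q.2| <= M.
Proof.
have [M [Mr hM]] := compact_bounded S_cpt.
have M_lt : M < `|M| + 1 by apply: le_lt_trans (real_ler_norm Mr) _; rewrite ltrDl.
exists (`|M| + 1) => [|q Sq]; first by rewrite addr_ge0.
by have := hM _ M_lt q Sq; rewrite /= prod_normE /= ge_max => /andP[].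
Qed.

Lemma compact_euclid_closed p :
  (forall e : R, 0 < e -> exists2 q, S q & euclid p q < e) -> S p.
Proof.
move=> h; apply: (compact_closed (@norm_hausdorff _ _) S_cpt) => B /nbhs_ballP [e e0 pB].
have [q Sq pq] := h e e0; exists q; split=> //; apply: pB.
by split; apply: le_lt_trans pq; [apply: normB1_le_euclid | apply: normB2_le_euclid].
Qed.

(* Each defining inequality of the triangle is violated by [sig_map m p] at most half
   as much as by [p]. *)
Lemma attractor_sub_triangle : S `<=` triangle.
Proof.
have [M M0 hM] := compact_coord_bounded.
have [s2 /andP[s1 s3]] := sqrt3_bounds R.
have s0 : 0 <= Num.sqrt (3 : R) := sqrtr_ge0 _.
have sM2 : Num.sqrt 3 * M <= 2 * M := ler_wpM2r M0 (ltW s3).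
have bounds p : S p -> [/\ - (Num.sqrt 3 * M) <= Num.sqrt 3 * p.1,
    Num.sqrt 3 * p.1 <= Num.sqrt 3 * M, - M <= p.2 & p.2 <= M].
  case/hM; rewrite !ler_norml => /andP[h1 h2] /andP[h3 h4].
  by rewrite -mulrN; split=> //; apply: ler_wpM2l.
move=> x Sx; have phi_ge0 (phi : R * R -> R) :
    (forall m p, phi p / 2 <= phi (sig_map m p)) ->
    (forall p, S p -> - (3 * M) <= phi p) -> 0 <= phi x.
  by move=> h1 h2; apply: selfsimilar_ge0 S_fix h1 h2 x Sx.
split; [| rewrite -subr_ge0 | rewrite -subr_ge0].
- by apply: (phi_ge0 (fun p => p.2)) => [[] p /= | p /bounds []]; lra.
- by apply: (phi_ge0 (fun p => Num.sqrt 3 * p.1 - p.2)) => [[] p /= | p /bounds []];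
    rewrite ?mulrDr; lra.
- by apply: (phi_ge0 (fun p => Num.sqrt 3 - Num.sqrt 3 * p.1 - p.2))
    => [[] p /= | p /bounds []]; rewrite ?mulrDr; lra.
Qed.

End Attractor.

Lemma sval_inj (T : Type) (P : T -> Prop) : injective (@sval T P).
Proof. by move=> [x px] [y py] /= e; apply: eq_exist. Qed.

(** * The coinductive extension of a coalgebra *)

Section Coinduction.
Variables (R : realType) (Y : Met3 R).
Local Notation dY := (@m3dist R Y).
Local Notation TY := (m3T Y).
Local Notation LY := (m3L Y).
Local Notation RY := (m3R Y).
Local Notation corner := (corner TY LY RY).
Local Notation tens := (tens TY LY RY).
Local Notation dloc := (dlocal dY TY LY RY).
Variable alpha : Y -> Tens TY LY RY.
Implicit Types (y x : Y) (n : nat).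

Definition head_label y : Mlab := (tens_repr (alpha y)).1.
Definition tail_point y : Y := (tens_repr (alpha y)).2.

Lemma alpha_tens y : alpha y = tens (head_label y) (tail_point y).
Proof. by rewrite tens_reprK. Qed.

Fixpoint approximant n y : R * R :=
  if n is n'.+1 then sig_map (head_label y) (approximant n' (tail_point y)) else vertT.

Lemma approximant_triangle n y : triangle (approximant n y).
Proof.
elim: n y => [|n IH] y /=; last exact/triangle_sig_map/IH.
exact: (triangle_corner R Ma Ma).
Qed.

Lemma approximant_cauchy n k y :
  euclid (approximant (n + k) y) (approximant n y) <= 1 / 2 ^+ n.
Proof.
elim: n y => [|n IH] y.
  by rewrite expr0 divr1; apply: triangle_diam; apply: approximant_triangle.
by rewrite addSn /= euclid_sig_map half_pow2S; have := IH (tail_point y); lra.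
Qed.

(* The point with address [head_label y, head_label (tail_point y), ...]. *)
Definition coind y : R * R :=
  sval (cid (cauchy_geometric_lim2 (fun n k => approximant_cauchy n k y))).

Lemma euclid_coind_approximant n y : euclid (coind y) (approximant n y) <= 2 / 2 ^+ n.
Proof.
rewrite /coind; case: (cid (cauchy_geometric_lim2 (fun n k => approximant_cauchy n k y))).
by move=> l /= hl; have := hl n; rewrite mulr1.
Qed.

Lemma coind_rec y : coind y = sig_map (head_label y) (coind (tail_point y)).
Proof.
apply: (@euclid_le_geometric_eq _ _ _ 2) => n.
apply: le_trans (euclid_triangle_ineq _ (approximant n.+1 y) _) _.
have h1 := euclid_coind_approximant n.+1 y.
have h2 : euclid (approximant n.+1 y) (sig_map (head_label y) (coind (tail_point y)))
    <= 2 / 2 ^+ n.+1.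
  rewrite /= euclid_sig_map euclid_sym half_pow2S.
  by have := euclid_coind_approximant n (tail_point y); lra.
by move: h1 h2; rewrite half_pow2S; lra.
Qed.

Lemma euclid_coind_le4 y x : euclid (coind y) (coind x) <= 4.
Proof.
apply: le_trans (euclid_triangle_ineq _ (approximant 0 y) _) _.
rewrite (euclid_sym _ (coind x)).
have := euclid_coind_approximant 0 y; have := euclid_coind_approximant 0 x.
by rewrite expr0 divr1 /=; lra.
Qed.

Lemma coind_unique (g : Y -> R * R) : (forall y, triangle (g y)) ->
  (forall y, g y = sig_map (head_label y) (g (tail_point y))) -> forall y, g y = coind y.
Proof.
move=> g_tri g_rec y; apply: (@euclid_le_geometric_eq _ _ _ 3) => n.
elim: n y => [|n IH] y.
  apply: le_trans (euclid_triangle_ineq _ (approximant 0 y) _) _.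
  have := triangle_diam (g_tri y) (approximant_triangle 0 y).
  rewrite (euclid_sym _ (coind y)); have := euclid_coind_approximant 0 y.
  by rewrite expr0 !divr1; lra.
by rewrite g_rec coind_rec euclid_sig_map half_pow2S; have := IH (tail_point y); lra.
Qed.

Hypothesis alpha_coalg : @is_coalgebra R Y dY TY LY RY alpha.

Let dY_ge0 x y : 0 <= dY x y. Proof. by case: (m3ax Y) => -[]. Qed.
Let dY_sym x y : dY x y = dY y x. Proof. by case: (m3ax Y) => -[]. Qed.
Let nTL : TY <> LY. Proof. by case: (m3ax Y) => _ []. Qed.
Let nTR : TY <> RY. Proof. by case: (m3ax Y) => _ []. Qed.
Let nLR : LY <> RY. Proof. by case: (m3ax Y) => _ []. Qed.

Lemma alpha_vertex m : alpha (corner m m) = tens m (corner m m).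
Proof.
by case: alpha_coalg => _ aT aL aR; case: m; [exact: aT | exact: aL | exact: aR].
Qed.

Lemma head_tail_vertex m :
  head_label (corner m m) = m /\ tail_point (corner m m) = corner m m.
Proof.
have g : Defs.glue TY LY RY (m, corner m m)
                            (head_label (corner m m), tail_point (corner m m)).
  by apply/tens_eq; rewrite -alpha_vertex alpha_tens.
by case: (glue_vertex nTL nTR nLR g) => -> ->.
Qed.

Lemma coind_vertex m : coind (corner m m) = vcorner m m.
Proof.
have [lm sm] := head_tail_vertex m; apply: (sig_map_fixed (m := m)).
by rewrite {2}coind_rec lm sm.
Qed.

Lemma coind_corner m k : coind (corner m k) = vcorner m k.
Proof.
have cT : coind TY = vertT := coind_vertex Ma.
have cL : coind LY = vertL := coind_vertex Mb.
have cR : coind RY = vertR := coind_vertex Mc.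
by rewrite (corner_map coind) cT cL cR.
Qed.

Lemma coind_tens y m x : alpha y = tens m x -> coind y = sig_map m (coind x).
Proof.
move=> ay; have : Defs.glue TY LY RY (head_label y, tail_point y) (m, x).
  by apply/tens_eq; rewrite -alpha_tens.
case/(glueP nTL nTR nLR) => [[<- <-]|[/= _ ey ->]]; first exact: coind_rec.
by rewrite coind_rec ey !coind_corner sig_map_corner.
Qed.

Lemma alpha_near_dlocal y e : 0 < e -> e <= 1 / 2 -> exists2 dl, 0 < dl & forall x,
  dY y x < dl -> dloc (head_label y, tail_point y) (head_label x, tail_point x) < e.
Proof.
move=> e0 e_le; case: alpha_coalg => cont _ _ _.
have [dl dl0 near] := cont y e e0; exists dl => // x /near.
by rewrite (alpha_tens y) (alpha_tens x) => /(dlocal_lt_dtens (m3ax Y)); apply.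
Qed.

(* Near a vertex the first label is that of the vertex: a junction costs 1/2. *)
Lemma coind_cont_vertex n m : exists2 dl, 0 < dl & forall x,
  dY (corner m m) x < dl -> euclid (coind (corner m m)) (coind x) <= 4 / 2 ^+ n.
Proof.
have [lm sm] := head_tail_vertex m.
elim: n => [|n [dn dn0 IH]].
  by exists 1 => // x _; rewrite expr0 divr1 euclid_coind_le4.
have [e e0 [e_14 e_dn]] := pos_below2 (a := 1 / 4) (b := dn / 2) ltac:(lra) ltac:(lra).
have [dl dl0 near] := alpha_near_dlocal (corner m m) e0 ltac:(lra).
exists dl => // x /near; rewrite lm sm.
case: (Mlab_eqbP (head_label x) m) => [lx|lx]; last first.
  by have := dlocal_corner_ge (m3ax Y) (tail_point x) lx lx; lra.
rewrite lx dlocal_same => hx.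
rewrite coind_rec lm sm [coind x]coind_rec lx euclid_sig_map half_pow2S.
by have := IH (tail_point x) ltac:(lra); lra.
Qed.

Lemma coind_cont_corner n : exists2 dl, 0 < dl & forall m k x,
  dY (corner m k) x < dl -> euclid (coind (corner m k)) (coind x) <= 4 / 2 ^+ n.
Proof.
have [da da0 ha] := coind_cont_vertex n Ma.
have [db db0 hb] := coind_cont_vertex n Mb.
have [dc dc0 hc] := coind_cont_vertex n Mc.
have [d d0 [d_a d_b]] := pos_below2 da0 db0.
have [dl dl0 [dl_d dl_c]] := pos_below2 d0 dc0.
exists dl => // m k x; have [[] ->] := corner_vertex TY LY RY m k => hx.
- by apply: ha; lra.
- by apply: hb; lra.
- by apply: hc; lra.
Qed.

Lemma coind_cont n y : exists2 dl, 0 < dl &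
  forall x, dY y x < dl -> euclid (coind y) (coind x) <= 4 / 2 ^+ n.
Proof.
elim: n y => [|n IH] y; first by exists 1 => // x _; rewrite expr0 divr1 euclid_coind_le4.
have [ds ds0 hs] := IH (tail_point y).
have [dc dc0 hc] := coind_cont_corner n.+1.
have [e' e'0 [e'_s e'_c]] := pos_below2 (a := ds / 2) (b := dc / 2) ltac:(lra) ltac:(lra).
have [e e0 [e_e' e_half]] := pos_below2 (a := e') (b := 1 / 2) e'0 ltac:(lra).
have [dl dl0 near] := alpha_near_dlocal y e0 e_half.
exists dl => // x /near; rewrite (coind_rec y) (coind_rec x).
case: (Mlab_eqbP (head_label y) (head_label x)) => [<-|lxy].
  rewrite dlocal_same euclid_sig_map half_pow2S => hx.
  by have := hs (tail_point x) ltac:(lra); lra.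
rewrite dlocal_diff // => hx.
have h1 : euclid (coind (tail_point y)) (vcorner (head_label y) (head_label x))
    <= 4 / 2 ^+ n.+1.
  rewrite euclid_sym -coind_corner; apply: hc; rewrite dY_sym.
  by have := dY_ge0 (corner (head_label x) (head_label y)) (tail_point x); lra.
have h2 : euclid (vcorner (head_label x) (head_label y)) (coind (tail_point x))
    <= 4 / 2 ^+ n.+1.
  rewrite -coind_corner; apply: hc.
  by have := dY_ge0 (tail_point y) (corner (head_label y) (head_label x)); lra.
apply: le_trans (euclid_triangle_ineq _
  (sig_map (head_label y) (vcorner (head_label y) (head_label x))) _) _.
rewrite euclid_sig_map sig_map_corner euclid_sig_map.
by move: h1 h2; rewrite half_pow2S; lra.
Qed.

Lemma coind_continuous : met_continuous dY (@euclid R) coind.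
Proof.
move=> y e e0; have [n ne] := exists_inv_pow2_lt (e := e / 4) ltac:(lra).
by have [dl dl0 h] := coind_cont n y; exists dl => // x /h; lra.
Qed.

End Coinduction.

(** * The gasket as final coalgebra *)

Section Gasket.
Variables (R : realType) (S : set (R * R)).
Hypotheses (S_cpt : compact S)
  (S_fix : S = sig_map Ma @` S `|` sig_map Mb @` S `|` sig_map Mc @` S).
Variables (pT pL pR : {p : R * R | S p}).
Hypotheses (hT : sval pT = vertT) (hL : sval pL = vertL) (hR : sval pR = vertR).
Variable sigma : {p : R * R | S p} -> Tens pT pL pR.
Hypothesis sigma_inv_tau : forall s m x, sigma s = tens pT pL pR m x ->
  sig_map m (sval x) = sval s.
Local Notation gasket := {p : R * R | S p}.
Local Notation dS := (fun p q : gasket => euclid (sval p) (sval q)).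
Local Notation tens := (tens pT pL pR).
Implicit Types (s x y : gasket).

Lemma gasket_triangle x : triangle (sval x).
Proof. exact: attractor_sub_triangle (svalP x). Qed.

Lemma sval_corner m n : sval (corner pT pL pR m n) = vcorner m n.
Proof. by rewrite (corner_map sval) hT hL hR. Qed.

Lemma gasket_tripointed : is_tripointed_metric dS pT pL pR.
Proof.
have [s2 /andP[s1 s3]] := sqrt3_bounds R.
have dist1 (x y : R * R) : (x.1 - y.1) ^+ 2 + (x.2 - y.2) ^+ 2 = 1 -> euclid x y = 1.
  by rewrite /euclid => ->; exact: sqrtr1.
split; split.
- by move=> x y; apply: euclid_ge0.
- by move=> x y; rewrite euclid_eq0; split=> [/sval_inj | ->].
- by move=> x y; apply: euclid_sym.
- by move=> x y z; apply: euclid_triangle_ineq.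
- by move=> x y; apply: triangle_diam; apply: gasket_triangle.
- by move/(congr1 sval); rewrite hT hL => -[]; lra.
- by move/(congr1 sval); rewrite hT hR => -[]; lra.
- by move/(congr1 sval); rewrite hL hR => -[]; lra.
- by rewrite hT hL hR; split; apply: dist1 => /=; nra.
Qed.

Let nTL : pT <> pL. Proof. by case: gasket_tripointed => _ []. Qed.
Let nTR : pT <> pR. Proof. by case: gasket_tripointed => _ []. Qed.
Let nLR : pL <> pR. Proof. by case: gasket_tripointed => _ []. Qed.

Lemma tens_sig_map_eq m n x y :
  sig_map m (sval x) = sig_map n (sval y) -> tens m x = tens n y.
Proof.
move=> e; apply/tens_eq.
case: (sig_map_eq (gasket_triangle x) (gasket_triangle y) e) => [[<- /sval_inj <-]|].
  exact: rst_refl.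
case=> mn [ex ey]; rewrite -(sval_corner m n) -(sval_corner n m) in ex ey.
by rewrite (sval_inj ex) (sval_inj ey); apply: glue_corner.
Qed.

Lemma sigma_tensE s m x : sigma s = tens m x <-> sig_map m (sval x) = sval s.
Proof.
split=> [|e]; first exact: sigma_inv_tau.
have [[k y] /= ek] := tens_surj (sigma s).
by rewrite ek; apply: tens_sig_map_eq; rewrite e; apply: sigma_inv_tau.
Qed.

Lemma sigma_lipschitz s s' : dtens dS (sigma s) (sigma s') <= 2 * dS s s'.
Proof.
have [[m x] /= ex] := tens_surj (sigma s); have [[n y] /= ey] := tens_surj (sigma s').
have [<- <-] := (sigma_inv_tau ex, sigma_inv_tau ey); rewrite ex ey /=.
apply: le_trans (dtens_le_dlocal gasket_tripointed _ _ _ _) _.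
case: (Mlab_eqbP m n) => [<-|mn].
  by rewrite dlocal_same /= euclid_sig_map; have := euclid_ge0 (sval x) (sval y); lra.
rewrite dlocal_diff //= !sval_corner.
exact: detour_le mn (gasket_triangle x) (gasket_triangle y).
Qed.

Lemma sigma_coalgebra : @is_coalgebra R gasket dS pT pL pR sigma.
Proof.
split.
- move=> s e e0; exists (e / 2) => [|s' hs']; first by lra.
  by apply: le_lt_trans (sigma_lipschitz s s') _; rewrite /= in hs' *; lra.
- by apply/(sigma_tensE pT Ma pT); rewrite hT; exact: (sig_map_vertex R Ma).
- by apply/(sigma_tensE pL Mb pL); rewrite hL; exact: (sig_map_vertex R Mb).
- by apply/(sigma_tensE pR Mc pR); rewrite hR; exact: (sig_map_vertex R Mc).
Qed.

Lemma approximant_in_gasket (Y : Met3 R) (alpha : Y -> Tens (m3T Y) (m3L Y) (m3R Y))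
    n (y : Y) :
  S (approximant alpha n y).
Proof.
elim: n y => [|n IH] y /=; first by rewrite -hT; apply: svalP.
apply/(selfsimilarP S_fix).
by exists (head_label alpha y), (approximant alpha n (tail_point alpha y)).
Qed.

Lemma coind_in_gasket (Y : Met3 R) (alpha : Y -> Tens (m3T Y) (m3L Y) (m3R Y)) (y : Y) :
  S (coind alpha y).
Proof.
apply: (compact_euclid_closed S_cpt) => e e0.
have [n ne] := exists_inv_pow2_lt (e := e / 2) ltac:(lra).
exists (approximant alpha n y); first exact: approximant_in_gasket.
by have := euclid_coind_approximant alpha n y; lra.
Qed.

Lemma sigma_final : @is_final_coalgebra R gasket dS pT pL pR sigma.
Proof.
move=> Y alpha alpha_coalg.
pose h (y : Y) : gasket := exist S (coind alpha y) (coind_in_gasket alpha y).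
exists h; split; first split; first split.
- exact: coind_continuous alpha_coalg.
- by apply: sval_inj; rewrite /= hT; exact: (coind_vertex alpha_coalg Ma).
- by apply: sval_inj; rewrite /= hL; exact: (coind_vertex alpha_coalg Mb).
- by apply: sval_inj; rewrite /= hR; exact: (coind_vertex alpha_coalg Mc).
- move=> y m x /(coind_tens alpha_coalg) ay; apply/sigma_tensE; exact: esym ay.
- move=> g [_ gF]; apply: funext => y; apply: sval_inj; rewrite /h /=; apply/esym.
  apply: (@coind_unique _ _ alpha (fun z => sval (g z))) => {}y.
    exact: gasket_triangle.
  by apply/esym/sigma_inv_tau/gF/alpha_tens.
Qed.

End Gasket.

Unset Implicit Arguments.

Theorem mainTheorem10 (R : realType) (S : set (R * R))
  (S_ne : S !=set0) (S_cpt : compact S)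
  (S_fix : S = sig_map Ma @` S `|` sig_map Mb @` S `|` sig_map Mc @` S)
  (pT pL pR : {p : R * R | S p})
  (hT : proj1_sig pT = (1 / 2, Num.sqrt 3 / 2))
  (hL : proj1_sig pL = (0, 0))
  (hR : proj1_sig pR = (1, 0))
  (sigma : {p : R * R | S p} -> Tens pT pL pR)
  (sigma_inv_tau : forall s m x, sigma s = tens pT pL pR m x ->
                     sig_map m (proj1_sig x) = proj1_sig s) :
  let dS := fun p q : {p : R * R | S p} => euclid (proj1_sig p) (proj1_sig q) in
  [/\ @is_tripointed_metric R {p : R * R | S p} dS pT pL pR,
      @is_coalgebra R {p : R * R | S p} dS pT pL pR sigma
    & @is_final_coalgebra R {p : R * R | S p} dS pT pL pR sigma].
Proof.
split.
- exact (gasket_tripointed S_cpt S_fix hT hL hR).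
- exact (sigma_coalgebra S_cpt S_fix hT hL hR sigma_inv_tau).
- exact (sigma_final S_cpt S_fix hT hL hR sigma_inv_tau).
Qed.
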